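(* Let $K$ be a strength measure. Then for every bipartite Hamiltonian $H$, $K(H)\ge0$, with $K(H)=0$ if and only if $H$ is local.
   Context: All Hamiltonians are Hermitian operators on finite-dimensional Hilbert spaces. A bipartite Hamiltonian acts on $\mathcal H_A\otimes\mathcal H_B$, with system $A$ held by Alice and $B$ by Bob; it is local if it has the form $H_A\otimes I_B+I_A\otimes H_B$ and nonlocal otherwise. Simulation model: Alice and Bob may attach local ancillas, apply arbitrary instantaneous local unitaries, and switch $H$ on for chosen times, to track (stroboscopically, for arbitrarily fine times) the evolution $e^{-iH't}$; the simulation rate $\gamma_{H'|H}$ is the supremum of $\gamma\ge0$ such that evolution under $H'$ for time $t$ is achievable using $H$ for total time $t/\gamma$. Local Hamiltonians can be produced at no cost (so $\gamma_{H_0|H}=\infty$ for local $H_0$), a local Hamiltonian cannot simulate a nonlocal one ($\gamma_{H|H_0}=0$), and (known fact) every nonlocal bipartite Hamiltonian can simulate every bounded bipartite Hamiltonian at a strictly positive rate. A strength measure is a function $K$ from bipartite Hamiltonians (on arbitrary finite dimensions) to $\mathbb R\cup\{\pm\infty\}$ that is finite on every Hamiltonian, not identically zero, and satisfies the monotonicity axiom $K(H)\ge\gamma_{H'|H}K(H')$ for all $H,H'$. *)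

From HB Require Import structures.
From mathcomp Require Import all_boot all_order all_algebra.
From mathcomp Require Import sesquilinear.
From mathcomp Require Import complex mxtens.
From mathcomp Require Import constructive_ereal Rstruct.
From Stdlib Require Import Rdefinitions.

Set Implicit Arguments.
Unset Strict Implicit.
Unset Printing Implicit Defensive.

Import Order.TTheory GRing.Theory Num.Theory.
Local Open Scope ring_scope.

Definition CC : numClosedFieldType := (Rdefinitions.R)[i].

(** A bipartite Hamiltonian: a Hermitian operator on
    H_A (x) H_B, with dim H_A = dA.+1 >= 1 and dim H_B = dB.+1 >= 1.
    Matrices on H_A (x) H_B are indexed via mxtens (Kronecker product
    [A *t B]). *)
Record bham := BHam {
  dimA : nat;
  dimB : nat;
  hmat : 'M[CC]_(dimA.+1 * dimB.+1);
  hmat_herm : hmat \is hermsymmx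
}.

Definition is_local (H : bham) : Prop :=
  exists (HA : 'M[CC]_((dimA H).+1)) (HB : 'M[CC]_((dimB H).+1)),
    HA \is hermsymmx /\ HB \is hermsymmx /\
    hmat H = HA *t 1%:M + 1%:M *t HB.

(** Abstract simulation-rate function: [rate H' H] is gamma_{H'|H},
    the rate at which H simulates H'.  Values in [0, +oo].  The facts
    stated in the paper's context are imposed as hypotheses. *)
Definition rate_function := bham -> bham -> \bar (Rdefinitions.R).

Definition rate_axioms (rate : rate_function) : Prop :=
  [/\ (forall H' H, (0 <= rate H' H)%E),
      (forall H0 H, is_local H0 -> rate H0 H = +oo%E),
      (forall H H0, is_local H0 -> ~ is_local H -> rate H H0 = 0%E) &
      (forall H' H, ~ is_local H -> (0 < rate H' H)%E)].

(** Strength measure: K is finite on every Hamiltonian (hence real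
    valued), not identically zero, and monotone:
    K(H) >= gamma_{H'|H} K(H')  (product in the extended reals,
    with the standard convention +oo * 0 = 0). *)
Definition strength_measure (rate : rate_function)
    (K : bham -> Rdefinitions.R) : Prop :=
  (exists H, K H != 0) /\
  (forall H H', (rate H' H * (K H')%:E <= (K H)%:E)%E).

(** A local Hamiltonian is simulated at infinite rate by every Hamiltonian,
    so finiteness of [K] and monotonicity applied to [(L, L)] force
    [K L <= 0]; it simulates a nonlocal one at rate zero, which gives
    [K L >= 0].  Hence [K] vanishes on local Hamiltonians, and since every
    [H] simulates the local zero Hamiltonian at rate [+oo], [K H >= 0].
    Finally a nonlocal [H] simulates every [H'] at a positive rate, so
    [K H = 0] would force [K H' <= 0], hence [K H' = 0], for every [H'],
    contradicting that [K] is not identically zero. *)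

From HB Require Import structures.
From mathcomp Require Import all_boot all_order all_algebra.
From mathcomp Require Import sesquilinear complex mxtens.
From mathcomp Require Import constructive_ereal Rstruct.
From Stdlib Require Import Rdefinitions Classical_Prop.
From mathcomp Require Import ring.
Set Implicit Arguments.
Unset Strict Implicit.
Unset Printing Implicit Defensive.

Import Order.TTheory GRing.Theory Num.Theory.
Local Open Scope ring_scope.

Lemma hermsymmx0 n : (0 : 'M[CC]_n) \is hermsymmx.
Proof. by apply/is_hermitianmxP/matrixP=> i j; rewrite !mxE conjC0 mulr0. Qed.

Definition zero_ham (dA dB : nat) : bham := BHam (hermsymmx0 (dA.+1 * dB.+1)).

Lemma zero_ham_local dA dB : is_local (zero_ham dA dB).
Proof.
exists 0, 0; split; first exact: hermsymmx0; split; first exact: hermsymmx0.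
by rewrite /= tens0mx tensmx0 addr0.
Qed.

(* The diagonal of [HA (x) I + I (x) HB] is [HA i i + HB j j], so its
   "second difference" along the two tensor indices vanishes. *)
Lemma local_diag_mixed (H : bham) : is_local H ->
  forall (i i' : 'I_(dimA H).+1) (j j' : 'I_(dimB H).+1),
  let d i j := hmat H (mxtens_index (i, j)) (mxtens_index (i, j)) in
  d i j + d i' j' = d i j' + d i' j.
Proof.
case=> HA [HB [_ [_ defH]]] i i' j j' d.
have dE a b : d a b = HA a a + HB b b.
  by rewrite /d defH mxE !tensmxE !mxE !eqxx !mulr1 !mul1r.
by rewrite !dE; ring.
Qed.

Definition proj11 : 'M[CC]_(2 * 2) := delta_mx (mxtens_index (1, 1)) (mxtens_index (1, 1)).

Lemma proj11_herm : proj11 \is hermsymmx.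
Proof.
apply/is_hermitianmxP/matrixP=> i j; rewrite !mxE expr0 mul1r.
by case: (i == _); case: (j == _); rewrite ?conjC0 ?conjC1.
Qed.

Definition proj11_ham : bham := @BHam 1 1 _ proj11_herm.

Lemma proj11_ham_nonlocal : ~ is_local proj11_ham.
Proof.
move=> /local_diag_mixed /(_ 0 1 0 1) /=.
rewrite /proj11 !mxE /= add0r addr0 => /eqP.
by rewrite oner_eq0.
Qed.

Section StrengthMeasure.

Variables (rate : rate_function) (K : bham -> Rdefinitions.R).

Hypothesis rate_local : forall H0 H, is_local H0 -> rate H0 H = +oo%E.
Hypothesis rate_from_local :
  forall H H0, is_local H0 -> ~ is_local H -> rate H H0 = 0%E.
Hypothesis rate_nonlocal_gt0 : forall H' H, ~ is_local H -> (0 < rate H' H)%E.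
Hypothesis K_monotone : forall H H', (rate H' H * (K H')%:E <= (K H)%:E)%E.

Lemma strength_local_le0 L : is_local L -> K L <= 0.
Proof.
move=> hL; rewrite leNgt; apply/negP=> KL_gt0.
have := K_monotone L L; rewrite rate_local //.
by rewrite mulyr gtr0_sg // mul1e leye_eq.
Qed.

Lemma strength_local_ge0 L : is_local L -> 0 <= K L.
Proof.
move=> hL; have := K_monotone L proj11_ham.
by rewrite rate_from_local // ?mul0e ?lee_fin //; exact: proj11_ham_nonlocal.
Qed.

Lemma strength_local_eq0 L : is_local L -> K L = 0.
Proof.
by move=> hL; apply/eqP; rewrite eq_le strength_local_le0 ?strength_local_ge0.
Qed.

Lemma strength_ge0 H : 0 <= K H.
Proof.
have hZ := zero_ham_local 0 0; have := K_monotone H (zero_ham 0 0).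
by rewrite rate_local // strength_local_eq0 // mule0 lee_fin.
Qed.

Lemma strength_nonlocal_eq0 H : ~ is_local H -> K H = 0 -> forall H', K H' = 0.
Proof.
move=> hN KH0 H'; have := K_monotone H H'.
rewrite KH0 pmule_rle0 ?rate_nonlocal_gt0 // lee_fin => KH'_le0.
by apply/eqP; rewrite eq_le KH'_le0 strength_ge0.
Qed.

End StrengthMeasure.

Theorem mainTheorem11 (rate : rate_function) (Hrate : rate_axioms rate)
    (K : bham -> Rdefinitions.R) (HK : strength_measure rate K) :
  forall H : bham, 0 <= K H /\ (K H = 0 <-> is_local H).
Proof.
case: Hrate => _ rate_local rate_from_local rate_nonlocal_gt0.
case: HK => [[H1 KH1_neq0] K_monotone] H.
split; first exact: (strength_ge0 rate_local rate_from_local K_monotone).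
split; last exact: (strength_local_eq0 rate_local rate_from_local K_monotone).
move=> KH0; apply: NNPP => hN.
have := strength_nonlocal_eq0 rate_local rate_from_local rate_nonlocal_gt0
  K_monotone hN KH0 H1.
by move/eqP; rewrite (negbTE KH1_neq0).
Qed.
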